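(* Let $N$ be a finite or infinite set and $\mathcal A\subseteq\mathcal P(N)$ a field of sets over $N$. Let $v\colon\mathcal A\to\mathbb R$ be a coalition function with $v(\emptyset)=0$ which is bounded below (there is $L\in\mathbb R$ with $v(S)\ge L$ for all $S\in\mathcal A$). For each $\varepsilon>0$ define $v_\varepsilon\colon\mathcal A\to\mathbb R$ by $v_\varepsilon(N)=v(N)+\varepsilon$ and $v_\varepsilon(S)=v(S)$ for all $S\in\mathcal A\setminus\{N\}$. If $\mathrm{ba\text{-}core}(v_\varepsilon)\neq\emptyset$ for all $\varepsilon>0$, then $\mathrm{ba\text{-}core}(v)\neq\emptyset$.
   Context: A field of sets over $N$ is a collection $\mathcal A\subseteq\mathcal P(N)$ with $\emptyset\in\mathcal A$, closed under complements in $N$ and finite unions. $\mathrm{ba}(\mathcal A)$ is the set of bounded additive set functions $\mu\colon\mathcal A\to\mathbb R$ (bounded: $\sup_{S\in\mathcal A}|\mu(S)|<\infty$; additive: $\mu(S\cup T)=\mu(S)+\mu(T)$ for disjoint $S,T\in\mathcal A$). For a coalition function $w\colon\mathcal A\to\mathbb R$, $\mathrm{ba\text{-}core}(w)=\{\mu\in\mathrm{ba}(\mathcal A):\mu(N)=w(N),\ \mu(S)\ge w(S)\text{ for all }S\in\mathcal A\setminus\{N\}\}$. *)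

From HB Require Import structures.
From mathcomp Require Import all_boot all_order all_algebra.
From mathcomp Require Import boolp classical_sets reals.
Set Implicit Arguments. Unset Strict Implicit. Unset Printing Implicit Defensive.
Import Order.TTheory GRing.Theory Num.Theory.
Local Open Scope classical_set_scope.
Local Open Scope ring_scope.

Definition field_of_sets (N : Type) (A : set (set N)) : Prop :=
  [/\ A set0,
      (forall S, A S -> A (~` S)) &
      (forall S T, A S -> A T -> A (S `|` T))].

(* mu restricted to A is a bounded additive set function, i.e. an element of ba(A).
   (Values of mu outside A are irrelevant.) *)
Definition is_ba (N : Type) (R : realType) (A : set (set N)) (mu : set N -> R) : Prop :=
  (exists M : R, forall S, A S -> `|mu S| <= M) /\
  (forall S T, A S -> A T -> S `&` T = set0 -> mu (S `|` T) = mu S + mu T).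

Definition in_ba_core (N : Type) (R : realType) (A : set (set N))
    (w : set N -> R) (mu : set N -> R) : Prop :=
  [/\ is_ba A mu, mu setT = w setT &
      (forall S, A S -> S <> setT -> w S <= mu S)].

Definition v_eps (N : Type) (R : realType) (v : set N -> R) (eps : R) : set N -> R :=
  fun S => if pselect (S = setT) then v setT + eps else v S.

From mathcomp Require Import all_boot all_order all_algebra.
From mathcomp Require Import boolp classical_sets functions reals.
From mathcomp Require Import topology normedtype lra.
Import Order.TTheory GRing.Theory Num.Theory.
Import numFieldTopology.Exports numFieldNormedType.Exports.
Local Open Scope classical_set_scope.
Local Open Scope ring_scope.

(* For 0 <= eps <= 1 every element of ba-core(v_eps) is bounded on A by a
   constant independent of eps: it is at least min(L, v N) on A, hence at most
   mu(N) - min(L, v N) by additivity.  Extended by 0 off A, these measures lie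
   in a product of compact intervals, compact for the pointwise topology by
   Tychonoff.  The additivity and core inequalities, together with
   v N <= mu N <= v N + eps, cut out closed subsets that decrease as eps goes
   to 0; a point in all of them lies in ba-core(v). *)

Section closed_families.
Context {T : topologicalType}.

Lemma closed_forall (I : Type) (Q : I -> set T) :
  (forall i, closed (Q i)) -> closed [set x | forall i, Q i x].
Proof.
move=> Qcl; have -> : [set x | forall i, Q i x] = \bigcap_(i in setT) Q i.
  by apply/seteqP; split=> x /= Qx i //; apply: Qx.
exact: closed_bigI.
Qed.

Lemma closed_implies (P : Prop) (X : set T) :
  closed X -> closed [set x | P -> X x].
Proof.
move=> Xcl; have [p|np] := pselect P.
  suff -> : [set x | P -> X x] = X by [].
  by apply/seteqP; split=> x /=; [apply | move=> ? _].
suff -> : [set x | P -> X x] = setT by exact: closedT.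
by apply/seteqP; split=> x // _ /np.
Qed.

Lemma compact_directed_bigcap_neq0 (K : set T) (I : Type) (D : set I)
    (G : I -> set T) :
  compact K -> D !=set0 ->
  (forall i j, D i -> D j -> exists2 k, D k & G k `<=` G i `&` G j) ->
  (forall i, D i -> [/\ closed (G i), G i !=set0 & G i `<=` K]) ->
  \bigcap_(i in D) G i !=set0.
Proof.
move=> Kco [i0 Di0] Gdir GP.
have FG : Filter (filter_from D G).
  by apply: filter_from_filter; first by exists i0.
have PFG : ProperFilter (filter_from D G).
  by apply: filter_from_proper => i /GP[].
have [|p [_ clp]] := Kco _ PFG.
  by have [_ _ GK] := GP _ Di0; exists i0.
exists p => i Di; have [Gcl _ _] := GP _ Di.
by apply: Gcl; move: clp; rewrite clusterE; apply; exists i.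
Qed.

End closed_families.

Section pointwise_topology.
Context {I : eqType} {R : realType}.
Local Notation RI := {ptws I -> R}.

Lemma coord_continuous (i : I) : continuous (fun f : RI => f i).
Proof. exact: (@proj_continuous I (fun=> R) i). Qed.

Lemma closed_coord (i : I) (D : set R) :
  closed D -> closed [set f : RI | D (f i)].
Proof. exact: preimage_closed (fun f _ => coord_continuous i f). Qed.

Lemma closed_coord_ge (i : I) (a : R) : closed [set f : RI | a <= f i].
Proof. by apply: (@closed_coord i [set x | a <= x]); exact: closed_ge. Qed.

Lemma closed_coord_le (i : I) (a : R) : closed [set f : RI | f i <= a].
Proof. by apply: (@closed_coord i [set x | x <= a]); exact: closed_le. Qed.

Lemma closed_coord_add (i j k : I) : closed [set f : RI | f k = f i + f j].
Proof.
have -> : [set f : RI | f k = f i + f j] =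
    (fun f : RI => f k - (f i + f j)) @^-1` [set 0].
  apply/seteqP; split=> f; rewrite /preimage /=.
    by move=> ->; rewrite subrr.
  by move/eqP; rewrite subr_eq0 => /eqP.
apply: preimage_closed; last exact: closed_eq.
move=> f _.
apply: (@continuousB _ _ _ (fun f : RI => f k) (fun f : RI => f i + f j)).
  exact: coord_continuous.
by apply: (@continuousD _ _ _ (fun f : RI => f i)); exact: coord_continuous.
Qed.

Lemma compact_box (M : R) :
  compact [set f : RI | forall i, `[-M, M]%classic (f i)].
Proof.
exact: (@tychonoff I (fun=> R) (fun=> `[-M, M]%classic)
  (fun=> @segment_compact R _ _)).
Qed.

End pointwise_topology.

Section v_eps_values.
Context {N : Type} {R : realType} (v : set N -> R) (eps : R).

Lemma v_epsT : v_eps v eps setT = v setT + eps.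
Proof. by rewrite /v_eps; case: pselect. Qed.

Lemma v_eps_neqT (S : set N) : S <> setT -> v_eps v eps S = v S.
Proof. by rewrite /v_eps; case: pselect. Qed.

End v_eps_values.

Section field_of_sets_theory.
Context {N : Type} {R : realType} {A : set (set N)}.
Hypothesis Afield : field_of_sets A.

Lemma field_of_setsT : A setT.
Proof. by have [A0 Acompl _] := Afield; rewrite -setC0; exact: Acompl _ A0. Qed.

Lemma additive_le_sub_lb {mu : set N -> R} {m : R} {S : set N} :
  (forall S T, A S -> A T -> S `&` T = set0 -> mu (S `|` T) = mu S + mu T) ->
  (forall S, A S -> m <= mu S) -> A S -> mu S <= mu setT - m.
Proof.
move=> mu_add mu_ge AS; have [_ Acompl _] := Afield.
have := mu_add _ _ AS (Acompl _ AS) (setICr S); rewrite setUCr => ->.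
have := mu_ge _ (Acompl _ AS); lra.
Qed.

End field_of_sets_theory.

Section approximate_cores.
Context {N : Type} {R : realType} {A : set (set N)} {v : set N -> R} {L : R}.
Hypotheses (Afield : field_of_sets A) (v_ge : forall S, A S -> L <= v S).
Hypothesis v_eps_core : forall eps : R, 0 < eps ->
  exists mu : set N -> R, in_ba_core A (v_eps v eps) mu.

Definition core_bound : R := `|Num.min L (v setT)| + `|v setT| + 1.

Lemma v_eps_core_bounded {eps : R} {mu : set N -> R} :
  0 <= eps <= 1 -> in_ba_core A (v_eps v eps) mu ->
  forall S, A S -> `|mu S| <= core_bound.
Proof.
move=> /andP[eps0 eps1] [[_ mu_add] muT mu_ge].
set m := Num.min L (v setT).
have [mL mvT] : m <= L /\ m <= v setT by rewrite !ge_min !lexx orbT.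
have mu_ge_m S : A S -> m <= mu S.
  move=> AS; have [->|S_neqT] := pselect (S = setT).
    by rewrite muT v_epsT; lra.
  by have := mu_ge _ AS S_neqT; have := v_ge _ AS; rewrite v_eps_neqT //; lra.
move=> S AS; have := additive_le_sub_lb Afield mu_add mu_ge_m AS.
rewrite muT v_epsT ler_norml /core_bound -/m => mu_le.
have := mu_ge_m _ AS; have := normr_ge0 (v setT); have := ler_norm (v setT).
have := ler_norm (- m); rewrite normrN => *; apply/andP; split; lra.
Qed.

Definition approx_core (eps : R) : set {ptws set N -> R} :=
  [set f | forall S, `[- core_bound, core_bound]%classic (f S)] `&`
  [set f | forall S T, A S -> A T -> S `&` T = set0 ->
             f (S `|` T) = f S + f T] `&`
  [set f | forall S, A S -> S <> setT -> v S <= f S] `&`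
  [set f | v setT <= f setT] `&` [set f | f setT <= v setT + eps].

Lemma closed_approx_core (eps : R) : closed (approx_core eps).
Proof.
repeat apply: closedI.
- by apply: closed_forall => S; apply: closed_coord; exact: interval_closed.
- do 2 apply: closed_forall => ?; do 3 apply: closed_implies.
  exact: closed_coord_add.
- apply: closed_forall => S; do 2 apply: closed_implies.
  exact: closed_coord_ge.
- exact: closed_coord_ge.
- exact: closed_coord_le.
Qed.

Lemma approx_core_le {eps eps' : R} :
  eps <= eps' -> approx_core eps `<=` approx_core eps'.
Proof.
move=> eps_le f [Gf f_leT]; split=> //.
by rewrite /= (le_trans f_leT) ?lerD2l.
Qed.

Lemma v_eps_core_approx_core {eps : R} {mu : set N -> R} :
  0 <= eps <= 1 -> in_ba_core A (v_eps v eps) mu -> approx_core eps (mu \_ A).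
Proof.
move=> eps01 mu_core; have mu_bd := v_eps_core_bounded eps01 mu_core.
case: mu_core => [[_ mu_add] muT mu_ge]; have [_ _ Aunion] := Afield.
have AsetT := field_of_setsT Afield.
have muA S : A S -> (mu \_ A) S = mu S by move=> AS; rewrite patchT ?inE.
do 4?split.
- move=> S; rewrite /= in_itv /= -ler_norml; have [AS|nAS] := pselect (A S).
    by rewrite muA //; exact: mu_bd.
  by rewrite patchC ?inE // normr0 /core_bound !addr_ge0.
- by move=> S T AS AT ST0; rewrite !muA //; [exact: mu_add | exact: Aunion].
- by move=> S AS S_neqT; have := mu_ge _ AS S_neqT; rewrite muA // v_eps_neqT.
- by rewrite /= muA // muT v_epsT; case/andP: eps01; lra.
- by rewrite /= muA // muT v_epsT.
Qed.

Lemma approx_core_neq0 (eps : R) : 0 < eps -> approx_core eps !=set0.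
Proof.
move=> eps0; set e := Num.min eps 1.
have [e_gt0 e_le1 e_le] : [/\ 0 < e, e <= 1 & e <= eps].
  by rewrite lt_min eps0 ltr01 !ge_min !lexx orbT.
have [mu mu_core] := v_eps_core _ e_gt0.
exists (mu \_ A); apply: (approx_core_le e_le).
by apply: v_eps_core_approx_core mu_core; rewrite ltW.
Qed.

Lemma approx_core_limit (f : set N -> R) :
  (forall eps, 0 < eps -> approx_core eps f) -> in_ba_core A v f.
Proof.
move=> f_approx; have [[[[f_box f_add] f_ge] f_geT] _] := f_approx 1 ltr01.
split=> //; first split=> //.
  by exists core_bound => S _; have := f_box S; rewrite /= in_itv /= -ler_norml.
apply/eqP; rewrite eq_le f_geT andbT; apply/ler_addgt0Pr => eps eps0.
by have [_ f_leT] := f_approx _ eps0.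
Qed.

End approximate_cores.

Arguments core_bound {N R} v L.
Arguments approx_core {N R} A v L eps.

Theorem corollary6 (N : Type) (R : realType) (A : set (set N)) (v : set N -> R) :
  field_of_sets A ->
  v set0 = 0 ->
  (exists L : R, forall S, A S -> L <= v S) ->
  (forall eps : R, 0 < eps -> exists mu : set N -> R, in_ba_core A (v_eps v eps) mu) ->
  exists mu : set N -> R, in_ba_core A v mu.
Proof.
move=> Afield _ [L v_ge] v_eps_core.
pose G := approx_core A v L.
have [f f_G] : \bigcap_(eps in [set eps | 0 < eps]) G eps !=set0.
  have Kco := compact_box (I := set N) (core_bound v L).
  apply: (@compact_directed_bigcap_neq0 _ _ R [set eps | 0 < eps] G Kco).
  - by exists 1; exact: ltr01.
  - move=> e1 e2 e1_gt0 e2_gt0; exists (Num.min e1 e2).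
      by rewrite /= lt_min e1_gt0.
    by move=> f Gf; split; apply: approx_core_le Gf; rewrite ge_min lexx ?orbT.
  - move=> eps eps0; split; first exact: closed_approx_core.
    + exact: approx_core_neq0 Afield v_ge v_eps_core _ eps0.
    + by move=> f [[[[]]]].
by exists f; exact: approx_core_limit f_G.
Qed.
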